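(* Let $B\in\mathbb{R}^{n\times n}$ be symmetric and invertible, partitioned into $p\times p$ blocks $B_{st}\in\mathbb{R}^{n_s\times n_t}$, and let $\hat B$ be its strictly block upper triangular part ($\hat B_{st}=B_{st}$ if $s<t$, $0$ otherwise). For any $\beta\in(0,\frac1{\rho(B)})$ and $t\in[0,1]$, if $\lambda$ is an eigenvalue of $(\beta B)^{-1}(I_n+t\beta\hat B)$ with $\mathrm{Re}(\lambda)>0$, then $$\mathrm{Re}(\lambda)\ge\frac12+\frac{1-\beta\rho(B)}{\beta\rho(B)}>\frac12.$$
   Context: $n_1,\dots,n_p$ are positive integers with $\sum_sn_s=n$; $\rho(B)$ denotes the spectral radius of $B$. *)

From HB Require Import structures.
From mathcomp Require Import all_boot all_order all_algebra.
From mathcomp Require Import complex.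
Set Implicit Arguments. Unset Strict Implicit. Unset Printing Implicit Defensive.
Import Order.TTheory GRing.Theory Num.Theory.
Local Open Scope ring_scope.

Definition cplx_eigenvalue (R : rcfType) (n : nat) (A : 'M[R]_n) (l : R[i]) :=
  exists2 v : 'cV[R[i]]_n, v != 0 & map_mx (real_complex R) A *m v = l *: v.

Definition is_spectral_radius (R : rcfType) (n : nat) (A : 'M[R]_n) (r : R) :=
  (exists2 l, cplx_eigenvalue A l & `|l| = r%:C%C) /\
  (forall l, cplx_eigenvalue A l -> `|l| <= r%:C%C).

Definition strict_block_upper (R : rcfType) (p : nat) (ns : 'I_p -> nat)
  (B : 'M[R]_(\sum_(s < p) ns s)) : 'M[R]_(\sum_(s < p) ns s) :=
  mxblock (fun s t : 'I_p =>
    if (s < t)%N then submxblock B s t else 0 : 'M[R]_(ns s, ns t)).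

(* Write the eigen-equation as (I + t beta U) v = lambda beta B v and pair it
   with v^*: with n = v^*v, a = v^*Bv and u = v^*Uv this reads
   n + t beta u = lambda beta a.  Splitting the symmetric B as U + U^T + D with D
   block diagonal gives a = 2 Re u + v^*Dv, and the Rayleigh bounds
   |a| <= rho n, v^*Dv <= rho n (D is a sum of compressions of B to the blocks)
   turn the real part of the equation into Re lambda >= 1 / (beta rho). *)

From HB Require Import structures.
From mathcomp Require Import all_boot all_order all_algebra.
From mathcomp Require Import complex.
From mathcomp Require Import spectral sesquilinear ring lra.
Set Implicit Arguments. Unset Strict Implicit. Unset Printing Implicit Defensive.
Import Order.TTheory GRing.Theory Num.Theory Num.Def.
Local Open Scope ring_scope.
Local Open Scope sesquilinear_scope.

Section QuadraticForm.
Variables (C : numClosedFieldType) (n : nat).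
Implicit Types (M N P : 'M[C]_n) (v : 'cV[C]_n).

Definition qform M v : C := (v ^t* *m M *m v) 0 0.

Lemma qformE M v : qform M v = \sum_i \sum_j (v i 0)^* * M i j * v j 0.
Proof.
rewrite /qform mxE [RHS]exchange_big; apply: eq_bigr => j _ /=.
by rewrite mxE big_distrl; apply: eq_bigr => i _; rewrite !mxE.
Qed.

Lemma qformD M N v : qform (M + N) v = qform M v + qform N v.
Proof. by rewrite /qform mulmxDr mulmxDl mxE. Qed.

Lemma qformZ a M v : qform (a *: M) v = a * qform M v.
Proof. by rewrite /qform -scalemxAr -scalemxAl mxE. Qed.

Lemma qform_conj P M v : qform (P ^t* *m M *m P) v = qform M (P *m v).
Proof. by rewrite /qform trmx_mul map_mxM !mulmxA. Qed.

Lemma qform_trC M v : qform (M ^t*) v = (qform M v)^*.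
Proof.
rewrite /qform; have -> : v ^t* *m M ^t* *m v = (v ^t* *m M *m v) ^t*.
  by rewrite !trmx_mul !map_mxM trmxCK mulmxA.
by rewrite !mxE.
Qed.

Lemma qform_invmx_eigen a M N v : N \in unitmx ->
  invmx N *m M *m v = a *: v -> qform M v = a * qform N v.
Proof.
move=> N_unit eigv.
have Mv : M *m v = a *: (N *m v) by rewrite scalemxAr -eigv -mulmxA mulKVmx.
by rewrite /qform -!mulmxA Mv -scalemxAr mxE.
Qed.

Lemma qform_diag (d : 'rV_n) v :
  qform (diag_mx d) v = \sum_i d 0 i * `|v i 0| ^+ 2.
Proof.
rewrite /qform -mulmxA mul_diag_mx mxE; apply: eq_bigr => i _.
by rewrite !mxE normCKC mulrCA mulrA.
Qed.

Lemma qform1 v : qform 1%:M v = \sum_i `|v i 0| ^+ 2.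
Proof.
rewrite -diag_const_mx qform_diag; apply: eq_bigr => i _.
by rewrite mxE mul1r.
Qed.

Lemma qform1_gt0 v : v != 0 -> 0 < qform 1%:M v.
Proof.
move=> v_neq0; rewrite qform1 lt_def sumr_ge0 ?andbT // => [|i _]; last first.
  exact: exprn_ge0.
apply: contra v_neq0; rewrite psumr_eq0 => [/allP v0|i _]; last exact: exprn_ge0.
apply/eqP/matrixP => i j; rewrite ord1 mxE.
by apply/eqP; rewrite -normr_eq0 -sqrf_eq0; apply: v0; rewrite mem_index_enum.
Qed.

End QuadraticForm.

Section Hermitian.
Variables (C : numClosedFieldType) (n : nat) (A : 'M[C]_n) (r : C).
Hypothesis hermA : A \is hermsymmx.

Lemma hermitian_trC : A ^t* = A.
Proof. by have /is_hermitianmxP := hermA; rewrite expr0 scale1r => <-. Qed.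

Lemma hermitian_qform_real v : qform A v \is Num.real.
Proof. by apply/CrealP; rewrite -qform_trC hermitian_trC. Qed.

Let P := spectralmx A.
Let d := spectral_diag A.

Lemma spectral_decomposition : A = P ^t* *m diag_mx d *m P.
Proof.
rewrite -invmx_unitary ?spectral_unitarymx //.
exact/orthomx_spectralP/hermitian_normalmx.
Qed.

Lemma spectral_diag_eigen k (e := delta_mx k 0 : 'cV[C]_n) :
  A *m (P ^t* *m e) = d 0 k *: (P ^t* *m e).
Proof.
have /unitarymxP PPt := spectral_unitarymx A.
rewrite {1}spectral_decomposition -!mulmxA (mulmxA P) PPt mul1mx.
rewrite scalemxAr mul_diag_mx; congr (_ *m _); apply/matrixP => i j.
by rewrite !mxE; case: (eqVneq i k) => [->|]; rewrite ?mulr1 ?mulr0.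
Qed.

Hypothesis eigen_le : forall l (u : 'cV_n), u != 0 -> A *m u = l *: u -> `|l| <= r.

Lemma hermitian_qform_norm_le v : `|qform A v| <= r * qform 1%:M v.
Proof.
have /unitarymxP PPt := spectral_unitarymx A.
have d_le k : `|d 0 k| <= r.
  apply: (eigen_le _ (spectral_diag_eigen k)); apply: contra (oner_neq0 C).
  move=> /eqP ePk; have -> : 1 = (P *m (P ^t* *m delta_mx k 0 : 'cV_n)) k 0.
    by rewrite mulmxA PPt mul1mx mxE !eqxx.
  by rewrite ePk mulmx0 mxE.
have -> : qform 1%:M v = qform 1%:M (P *m v).
  by rewrite -qform_conj mulmx1 mulmx1C.
rewrite {1}spectral_decomposition qform_conj qform_diag qform1 mulr_sumr.
apply: le_trans (ler_norm_sum _ _ _) _; apply: ler_sum => k _.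
by rewrite normrM normrX normr_id ler_wpM2r ?exprn_ge0.
Qed.

End Hermitian.

Section Blocks.
Variables (p : nat) (ns : 'I_p -> nat).
Local Notation N := (\sum_(s < p) ns s).
Local Notation block i := (tagnat.sig1 i).

Definition block_diag (T : nmodType) (M : 'M[T]_N) : 'M[T]_N :=
  \matrix_(i, j) if block i == block j then M i j else 0.

Lemma map_block_diag (T U : nmodType) (f : {additive T -> U}) (M : 'M[T]_N) :
  map_mx f (block_diag M) = block_diag (map_mx f M).
Proof. by apply/matrixP => i j; rewrite !mxE; case: ifP; rewrite ?raddf0. Qed.

Lemma strict_block_upperE (R : rcfType) (B : 'M[R]_N) i j :
  strict_block_upper B i j = if (block i < block j)%N then B i j else 0.
Proof.
rewrite /strict_block_upper /mxblock mxE; case: ifP => _; rewrite ?mxE //.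
by rewrite !tagnat.sig2K.
Qed.

Lemma symmetric_block_decomposition (R : rcfType) (B : 'M[R]_N) : B^T = B ->
  B = strict_block_upper B + (strict_block_upper B)^T + block_diag B.
Proof.
move=> /matrixP symB; apply/matrixP => i j.
rewrite 2![in RHS]mxE [_^T _ _]mxE [block_diag _ _ _]mxE !strict_block_upperE.
have := symB i j; rewrite mxE => ->.
case: ltngtP => [lt_ij|lt_ji|/val_inj ->]; rewrite ?eqxx ?addr0 ?add0r //;
  by rewrite ifN ?addr0 // -val_eqE neq_ltn ?lt_ij ?lt_ji ?orbT.
Qed.

Variable C : numClosedFieldType.
Implicit Types (M : 'M[C]_N) (v : 'cV[C]_N).

Definition block_part v s : 'cV[C]_N :=
  \col_i if block i == s then v i 0 else 0.

Lemma qform_block_diag M v :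
  qform (block_diag M) v = \sum_s qform M (block_part v s).
Proof.
rewrite qformE (eq_bigr _ (fun s _ => qformE _ _)) [RHS]exchange_big /=.
apply: eq_bigr => i _; rewrite [RHS]exchange_big /=; apply: eq_bigr => j _.
rewrite [RHS](bigD1 (block i)) //= [X in _ + X]big1 => [|s /negbTE s_neq].
  by rewrite !mxE eqxx addr0 (eq_sym (block j)); case: ifP; rewrite ?mulr0 ?mul0r.
by rewrite !mxE eq_sym s_neq conjC0 !mul0r.
Qed.

Lemma block_diag1 : block_diag 1%:M = 1%:M :> 'M[C]_N.
Proof.
apply/matrixP => i j; rewrite !mxE.
by case: (eqVneq i j) => [->|]; rewrite ?eqxx //; case: ifP.
Qed.

Lemma block_diag_trC M : (block_diag M) ^t* = block_diag (M ^t*).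
Proof.
by apply/matrixP => i j; rewrite !mxE eq_sym; case: ifP; rewrite ?conjC0.
Qed.

Lemma block_diag_hermitian M : M \is hermsymmx -> block_diag M \is hermsymmx.
Proof.
move=> hermM; apply/is_hermitianmxP.
by rewrite expr0 scale1r block_diag_trC hermitian_trC.
Qed.

Lemma hermitian_qform_block_diag_le (A : 'M[C]_N) r v : A \is hermsymmx ->
  (forall l (u : 'cV_N), u != 0 -> A *m u = l *: u -> `|l| <= r) ->
  qform (block_diag A) v <= r * qform 1%:M v.
Proof.
move=> hermA eigen_le.
rewrite qform_block_diag -block_diag1 qform_block_diag mulr_sumr.
apply: ler_sum => s _; apply: real_ler_normlW; first exact: hermitian_qform_real.
exact: hermitian_qform_norm_le.
Qed.

End Blocks.

(* Here 1 / 0 = 0 is what rules out rho = 0. *)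
Lemma lt_div1_mul_lt1 (F : realFieldType) (beta rho : F) :
  0 <= rho -> 0 < beta -> beta < 1 / rho -> 0 < rho /\ beta * rho < 1.
Proof.
move=> rho_ge0 beta_gt0 beta_lt; have rho_gt0 : 0 < rho.
  rewrite lt_def rho_ge0 andbT; apply: contraTneq beta_lt => ->.
  by rewrite invr0 mulr0 -leNgt ltW.
by split; rewrite // -ltr_pdivlMr // div1r -[rho^-1]div1r.
Qed.

Lemma real_part_lower_bound (F : realFieldType) (nv a d t beta rho lr : F) :
  0 < nv -> 0 <= t <= 1 -> 0 < beta -> 0 < rho -> beta * rho < 1 ->
  `|a| <= rho * nv -> d <= rho * nv ->
  nv + t * beta * ((a - d) / 2) = lr * (beta * a) -> 0 < lr ->
  1 / (beta * rho) <= lr.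
Proof.
move=> nv_gt0 /andP[t_ge0 t_le1] beta_gt0 rho_gt0 k_lt1.
rewrite ler_norml => /andP[a_ge a_le] d_le eq_re lr_gt0.
set k := beta * rho.
have k_gt0 : 0 < k by rewrite mulr_gt0.
have tk_lt1 : t * k < 1 by apply: le_lt_trans k_lt1; rewrite ler_piMl // ltW.
have tbeta_ge0 : 0 <= t * beta by rewrite mulr_ge0 // ltW.
have a_gt0 : 0 < a.
  have : 0 < nv + t * beta * ((a - d) / 2).
    have -> : nv + t * beta * ((a - d) / 2)
      = nv * (1 - t * k) + t * beta * (a - d + 2 * rho * nv) / 2.
      by rewrite /k; field.
    have : 0 <= t * beta * (a - d + 2 * rho * nv) by rewrite mulr_ge0 //; lra.
    have : 0 < nv * (1 - t * k) by rewrite mulr_gt0 // subr_gt0.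
    lra.
  by rewrite eq_re !pmulr_rgt0.
have : a <= k * lr * a.
  have -> : k * lr * a = (rho * nv - a) * (1 - t * k / 2)
                         + t * k * (rho * nv - d) / 2 + a.
    have -> : k * lr * a = rho * (lr * (beta * a)) by rewrite /k; ring.
    by rewrite -eq_re /k; field.
  have : 0 <= t * k * (rho * nv - d) by rewrite mulr_ge0 ?subr_ge0 // mulr_ge0 // ltW.
  have : 0 <= (rho * nv - a) * (1 - t * k / 2) by rewrite mulr_ge0 ?subr_ge0 //; lra.
  lra.
rewrite -[X in X <= _ -> _]mul1r ler_pM2r // => one_le.
by rewrite ler_pdivrMr // mulrC.
Qed.

Section Complexification.
Variable R : rcfType.
Local Notation toC := (real_complex R).

Lemma norm_real_complex (a : R) : `|toC a| = toC `|a|.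
Proof.
have [a_ge0|a_lt0] := ger0P a; first by rewrite !ger0_norm ?ler0c.
by rewrite !ltr0_norm ?ltcR ?rmorphN.
Qed.

Lemma map_real_complex_trC m n (M : 'M[R]_(m, n)) :
  (map_mx toC M) ^t* = map_mx toC M^T.
Proof. by apply/matrixP => i j; rewrite !mxE conj_Creal ?complex_real. Qed.

Lemma real_symmetric_hermitian n (B : 'M[R]_n) :
  B^T = B -> map_mx toC B \is hermsymmx.
Proof.
by move=> symB; apply/is_hermitianmxP; rewrite expr0 scale1r map_real_complex_trC symB.
Qed.

Lemma spectral_radius_ge0 n (B : 'M[R]_n) rho : is_spectral_radius B rho -> 0 <= rho.
Proof. by move=> [[l _ norm_l] _]; rewrite -ler0c -norm_l normr_ge0. Qed.

Lemma Re_quadratic_identity (nv a d s b : R) (u l : R[i]) :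
  toC nv + toC s * u = l * (toC b * toC a) -> toC a = u + u^* + toC d ->
  nv + s * ((a - d) / 2) = complex.Re l * (b * a).
Proof.
case: u l => [ur ui] [lr li] /(congr1 (@complex.Re R)) eq_nv.
move=> /(congr1 (@complex.Re R)); rewrite addcJ; simpc => /= e_a.
by move: eq_nv; simpc => /= <-; rewrite e_a; field.
Qed.

Lemma Re_eigen_lower_bound (nv a d u l : R[i]) (t beta rho : R) :
  0 < nv -> a \is Num.real -> `|a| <= toC rho * nv ->
  d \is Num.real -> d <= toC rho * nv ->
  nv + toC (t * beta) * u = l * (toC beta * a) -> a = u + u^* + d ->
  0 <= t <= 1 -> 0 < beta -> 0 < rho -> beta * rho < 1 -> 0 < complex.Re l ->
  1 / (beta * rho) <= complex.Re l.
Proof.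
move=> nv_gt0 /complex_realP[a' ->] a_le /complex_realP[d' ->] d_le eq_nv split.
move=> t01 beta_gt0 rho_gt0 k_lt1 Re_gt0.
have /complex_realP[nv' e_nv] := gtr0_real nv_gt0.
rewrite {}e_nv in nv_gt0 a_le d_le eq_nv; rewrite ltcR in nv_gt0.
rewrite norm_real_complex -rmorphM lecR in a_le; rewrite -rmorphM lecR in d_le.
apply: (real_part_lower_bound nv_gt0 t01 beta_gt0 rho_gt0 k_lt1 a_le d_le _ Re_gt0).
exact: Re_quadratic_identity eq_nv split.
Qed.

End Complexification.

Theorem lemma13 (R : rcfType) (p : nat) (ns : 'I_p -> nat)
  (B : 'M[R]_(\sum_(s < p) ns s)) (rho beta t : R) (lambda : R[i]) :
  (forall s, (0 < ns s)%N) ->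
  B^T = B ->
  B \in unitmx ->
  is_spectral_radius B rho ->
  0 < beta -> beta < 1 / rho ->
  0 <= t <= 1 ->
  cplx_eigenvalue
    (invmx (beta *: B) *m (1%:M + (t * beta) *: strict_block_upper B)) lambda ->
  0 < complex.Re lambda ->
  1 / 2 + (1 - beta * rho) / (beta * rho) <= complex.Re lambda /\
  1 / 2 < 1 / 2 + (1 - beta * rho) / (beta * rho).
Proof.
move=> _ symB unitB rhoB beta_gt0 beta_lt t01 [v v_neq0 eigv] Re_gt0.
set A := map_mx (real_complex R) B.
set U := map_mx (real_complex R) (strict_block_upper B).
have hermA : A \is hermsymmx := real_symmetric_hermitian symB.
have A_eig_le l (u : 'cV_(\sum_(s < p) ns s)) :
    u != 0 -> A *m u = l *: u -> `|l| <= rho%:C%C.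
  by move=> u_neq0 eAu; apply: rhoB.2; exists u.
have [rho_gt0 k_lt1] := lt_div1_mul_lt1 (spectral_radius_ge0 rhoB) beta_gt0 beta_lt.
have k_gt0 : 0 < beta * rho by rewrite mulr_gt0.
have eq_qform :
    qform 1%:M v + (t * beta)%:C%C * qform U v = lambda * (beta%:C%C * qform A v).
  rewrite -qformZ -qformD -(qformZ _ A); apply: qform_invmx_eigen.
    by rewrite unitmxZ ?map_unitmx // unitfE fmorph_eq0 gt_eqF.
  by move: eigv; rewrite map_mxM map_invmx map_mxD map_mx1 !map_mxZ.
have A_split : qform A v = qform U v + (qform U v)^* + qform (block_diag A) v.
  rewrite {1}/A {1}(symmetric_block_decomposition symB) !map_mxD map_block_diag.
  by rewrite -map_real_complex_trC !qformD qform_trC.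
have := Re_eigen_lower_bound (qform1_gt0 v_neq0) (hermitian_qform_real hermA v)
  (hermitian_qform_norm_le hermA A_eig_le v)
  (hermitian_qform_real (block_diag_hermitian hermA) v)
  (hermitian_qform_block_diag_le v hermA A_eig_le)
  eq_qform A_split t01 beta_gt0 rho_gt0 k_lt1 Re_gt0.
have -> : 1 / 2 + (1 - beta * rho) / (beta * rho) = 1 / (beta * rho) - 1 / 2.
  by field; rewrite !gt_eqF.
have : 1 < 1 / (beta * rho) by rewrite ltr_pdivlMr // mul1r.
by split; lra.
Qed.
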